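(* Let $V$ be a real Hilbert space, $\mathcal D$ a dictionary, $V_n\subset V$ any subspace of dimension $n$ with orthonormal basis $(\phi_1,\dots,\phi_n)$, and $\kappa\in(0,1)$. If $(W_m)_{m\ge0}$ is generated by the worst case OMP algorithm with parameter $\kappa$, then $\lim_{m\to\infty}r_m=0$.
   Context: A dictionary is a set $\mathcal D\subset V$ of elements with $\|\omega\|=1$ for all $\omega\in\mathcal D$ whose finite linear combinations are dense in $V$. Worst case OMP: $W_0=\{0\}$; for $k\ge1$, take $v_k\in\operatorname{argmax}\{\|v-P_{W_{k-1}}v\|: v\in V_n,\ \|v\|=1\}$, then choose $\omega_k\in\mathcal D$ with $|\langle v_k-P_{W_{k-1}}v_k,\omega_k\rangle|\ge\kappa\sup_{\omega\in\mathcal D}|\langle v_k-P_{W_{k-1}}v_k,\omega\rangle|$, and set $W_k=\operatorname{span}\{\omega_1,\dots,\omega_k\}$ ($P_X$ is the orthogonal projection onto $X$). The residual is $r_m=\sum_{i=1}^n\|\phi_i-P_{W_m}\phi_i\|^2$. *)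

From HB Require Import structures.
From mathcomp Require Import all_boot all_order all_algebra.
From mathcomp Require Import all_classical all_reals all_analysis.
Set Implicit Arguments. Unset Strict Implicit. Unset Printing Implicit Defensive.
Import Order.TTheory GRing.Theory Num.Theory.
Import numFieldNormedType.Exports.
Local Open Scope classical_set_scope.
Local Open Scope ring_scope.

(* A real inner product compatible with the norm of V:
   symmetric, linear in the first argument, and ||x||^2 = <x,x>.
   Together with completeness of V this makes V a real Hilbert space. *)
Definition is_inner_product {R : realType} {V : normedModType R}
  (inner : V -> V -> R) : Prop :=
  [/\ (forall x y, inner x y = inner y x),
      (forall (a : R) x y z, inner (a *: x + y) z = a * inner x z + inner y z)
    & (forall x, `|x| ^+ 2 = inner x x)].

Definition lin_span {R : realType} {V : normedModType R} (S : set V) : set V :=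
  [set v | exists (m : nat) (c : 'I_m -> R) (s : 'I_m -> V),
     (forall i, S (s i)) /\ v = \sum_(i < m) c i *: s i].

Definition is_dictionary {R : realType} {V : normedModType R} (D : set V) : Prop :=
  (forall w, D w -> `|w| = 1) /\ closure (lin_span D) = setT.

Definition is_orth_proj {R : realType} {V : normedModType R}
  (inner : V -> V -> R) (W : set V) (x p : V) : Prop :=
  W p /\ (forall w, W w -> inner (x - p) w = 0).

(* The orthogonal projection P_W x (chosen classically; it exists and is
   unique for the finite-dimensional subspaces used below). *)
Definition orth_proj {R : realType} {V : normedModType R}
  (inner : V -> V -> R) (W : set V) (x : V) : V :=
  xget 0 [set p | is_orth_proj inner W x p].

Definition OMP_space {R : realType} {V : normedModType R}
  (omega : nat -> V) (k : nat) : set V :=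
  lin_span [set omega i | i in [set i : nat | (1 <= i <= k)%N]].

(* (v_k)_{k>=1}, (omega_k)_{k>=1} are generated by worst case OMP with parameter
   kappa on the subspace Vn (values at index 0 are irrelevant). *)
Definition worst_case_OMP {R : realType} {V : normedModType R}
  (inner : V -> V -> R) (D : set V) (Vn : set V) (kappa : R)
  (v omega : nat -> V) : Prop :=
  forall k : nat, (1 <= k)%N ->
    let P := orth_proj inner (OMP_space omega k.-1) in
    [/\ Vn (v k), `|v k| = 1,
        (forall u, Vn u -> `|u| = 1 -> `|u - P u| <= `|v k - P (v k)|),
        D (omega k)
      & kappa * sup [set `|inner (v k - P (v k)) w| | w in D]
          <= `|inner (v k - P (v k)) (omega k)| ].

Definition OMP_residual {R : realType} {V : normedModType R}
  (inner : V -> V -> R) (n : nat) (phi : 'I_n -> V) (omega : nat -> V) (m : nat) : R :=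
  \sum_(i < n) `|phi i - orth_proj inner (OMP_space omega m) (phi i)| ^+ 2.

From HB Require Import structures.
From mathcomp Require Import all_boot all_order all_algebra.
From mathcomp Require Import all_classical all_reals all_analysis.
From mathcomp Require Import ring lra.
Import Order.TTheory GRing.Theory Num.Theory.
Import numFieldNormedType.Exports.
Local Open Scope classical_set_scope.
Local Open Scope ring_scope.

(* The residual r_k is nonincreasing, and passing from W_k to W_(k+1) removes
   at least <g_k, omega_(k+1)>^2, where g_k = v_(k+1) - P_(W_k) v_(k+1); this is
   Bessel's inequality for the unit vector v_(k+1) of V_n.  Hence the selected
   correlations tend to 0, the weak greedy choice makes every correlation
   <g_k, w> with w in the dictionary tend to 0, and density of the dictionary
   together with |g_k| <= 1 gives <g_k, phi_i> -> 0.  Finally, since v_(k+1)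
   is a worst case,
     r_k <= n |g_k|^2 = n <g_k, v_(k+1)> <= n sum_i |<g_k, phi_i>|. *)

Section InnerProduct.
Context {R : realType} {V : normedModType R} {inner : V -> V -> R}.
Hypothesis ip : is_inner_product inner.

Lemma innerC x y : inner x y = inner y x.
Proof. by case: ip. Qed.

Lemma sqr_norm_inner x : `|x| ^+ 2 = inner x x.
Proof. by case: ip. Qed.

Lemma innerDl x y z : inner (x + y) z = inner x z + inner y z.
Proof. by case: ip => _ lin _; have := lin 1 x y z; rewrite scale1r mul1r. Qed.

Lemma inner0l z : inner 0 z = 0.
Proof. by have := innerDl 0 0 z; rewrite addr0; lra. Qed.

Lemma innerZl a x z : inner (a *: x) z = a * inner x z.
Proof.
by case: ip => _ lin _; have := lin a x 0 z; rewrite addr0 inner0l addr0.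
Qed.

Lemma innerNl x z : inner (- x) z = - inner x z.
Proof. by rewrite -scaleN1r innerZl mulN1r. Qed.

Lemma innerBl x y z : inner (x - y) z = inner x z - inner y z.
Proof. by rewrite innerDl innerNl. Qed.

Lemma inner0r z : inner z 0 = 0.
Proof. by rewrite innerC inner0l. Qed.

Lemma innerDr x y z : inner z (x + y) = inner z x + inner z y.
Proof. by rewrite !(innerC z) innerDl. Qed.

Lemma innerZr a x z : inner z (a *: x) = a * inner z x.
Proof. by rewrite !(innerC z) innerZl. Qed.

Lemma innerBr x y z : inner z (x - y) = inner z x - inner z y.
Proof. by rewrite !(innerC z) innerBl. Qed.

Lemma inner_suml m (c : 'I_m -> R) (s : 'I_m -> V) z :
  inner (\sum_(i < m) c i *: s i) z = \sum_(i < m) c i * inner (s i) z.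
Proof.
elim/big_rec2: _ => [|i y1 y2 _ <-]; first exact: inner0l.
by rewrite innerDl innerZl.
Qed.

Lemma pythagoras x y : inner x y = 0 -> `|x + y| ^+ 2 = `|x| ^+ 2 + `|y| ^+ 2.
Proof.
move=> xy; rewrite !sqr_norm_inner innerDl !innerDr xy (innerC y) xy.
by rewrite addr0 add0r.
Qed.

Lemma cauchy_schwarz_sqr x y : inner x y ^+ 2 <= `|x| ^+ 2 * `|y| ^+ 2.
Proof.
have [->|y_neq0] := eqVneq y 0; first by rewrite inner0r expr0n mulr_ge0.
have y2_gt0 : 0 < `|y| ^+ 2 by rewrite exprn_gt0 // normr_gt0.
(* Expand [0 <= |x - t y|^2] at the minimizing [t = <x,y> / |y|^2]. *)
pose t := inner x y / `|y| ^+ 2.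
have : 0 <= `|x - t *: y| ^+ 2 by rewrite exprn_ge0.
rewrite sqr_norm_inner innerBl !innerBr !innerZl !innerZr -!sqr_norm_inner.
rewrite (innerC y x) /t => h; rewrite -subr_ge0.
have -> : `|x| ^+ 2 * `|y| ^+ 2 - inner x y ^+ 2 = `|y| ^+ 2 *
  (`|x| ^+ 2 - inner x y / `|y| ^+ 2 * inner x y -
   (inner x y / `|y| ^+ 2 * inner x y -
    inner x y / `|y| ^+ 2 * (inner x y / `|y| ^+ 2 * `|y| ^+ 2))).
  by field; rewrite normr_eq0.
exact: mulr_ge0 (ltW y2_gt0) h.
Qed.

Lemma cauchy_schwarz x y : `|inner x y| <= `|x| * `|y|.
Proof.
rewrite -ler_sqr ?nnegrE ?mulr_ge0 // exprMn real_normK ?num_real //.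
exact: cauchy_schwarz_sqr.
Qed.

Lemma weak_greedy_le (D : set V) (x w0 : V) (kappa : R) :
  0 < kappa -> (forall w, D w -> `|w| = 1) ->
  kappa * sup [set `|inner x w| | w in D] <= `|inner x w0| ->
  forall w, D w -> `|inner x w| <= kappa^-1 * `|inner x w0|.
Proof.
move=> kappa_gt0 D_unit greedy w Dw.
rewrite ler_pdivlMl //; apply: le_trans greedy; rewrite ler_pM2l //.
apply: sup_upper_bound; last by exists w.
split; first by exists `|inner x w|, w.
exists `|x| => _ [w' Dw' <-]; apply: le_trans (cauchy_schwarz _ _) _.
by rewrite (D_unit _ Dw') mulr1.
Qed.

End InnerProduct.

Section LinearSpan.
Context {R : realType} {V : normedModType R}.
Implicit Types S T : set V.

Lemma lin_span_ind S T :
  T 0 -> (forall x s c, T x -> S s -> T (x + c *: s)) -> lin_span S `<=` T.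
Proof.
move=> T0 TS _ [m [c [s [Ss ->]]]].
elim: m c s Ss => [|m IH] c s Ss; first by rewrite big_ord0.
by rewrite big_ord_recl addrC; apply: TS => //; apply: IH.
Qed.

Lemma lin_span0 S : lin_span S 0.
Proof.
by exists 0%N, (fun=> 0), (fun=> 0); split; [case | rewrite big_ord0].
Qed.

Lemma lin_span_addZ S x s c :
  lin_span S x -> S s -> lin_span S (x + c *: s).
Proof.
move=> [m [c0 [s0 [Ss0 ->]]]] Ss.
exists m.+1, (fun i => if unlift ord0 i is Some j then c0 j else c),
  (fun i => if unlift ord0 i is Some j then s0 j else s); split.
  by move=> i; case: (unlift ord0 i).
rewrite big_ord_recl unlift_none addrC; congr (_ + _).
by apply: eq_bigr => i _; rewrite liftK.
Qed.

Lemma sub_lin_span S : S `<=` lin_span S.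
Proof.
move=> s Ss; rewrite -[s]add0r -[s]scale1r.
exact: lin_span_addZ (lin_span0 S) Ss.
Qed.

Lemma lin_spanZD S a x y :
  lin_span S x -> lin_span S y -> lin_span S (a *: x + y).
Proof.
move: x; apply: (@lin_span_ind S (fun x =>
  lin_span S y -> lin_span S (a *: x + y))) => [|x s c IH Ss] Sy.
  by rewrite scaler0 add0r.
rewrite scalerDr scalerA -addrA [_ + y]addrC addrA.
by apply: lin_span_addZ Ss; apply: IH.
Qed.

Lemma lin_spanB S x y : lin_span S x -> lin_span S y -> lin_span S (x - y).
Proof. by move=> Sx Sy; rewrite addrC -scaleN1r; apply: lin_spanZD. Qed.

Lemma lin_spanS S T : S `<=` T -> lin_span S `<=` lin_span T.
Proof.
by move=> ST _ [m [c [s [Ss ->]]]]; exists m, c, s; split => // i; apply: ST.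
Qed.

End LinearSpan.

Section Projection.
Context {R : realType} {V : normedModType R} {inner : V -> V -> R}.
Hypothesis ip : is_inner_product inner.

Lemma orth_lin_span (S : set V) z :
  (forall s, S s -> inner s z = 0) -> forall w, lin_span S w -> inner w z = 0.
Proof.
move=> Sz; apply: lin_span_ind => [|x s c xz Ss] /=; first exact: inner0l.
by rewrite (innerDl ip) (innerZl ip) xz Sz // mulr0 addr0.
Qed.

Context {W : set V}.
Hypothesis W_proj : forall x, exists p, is_orth_proj inner W x p.
Local Notation P := (orth_proj inner W).

Lemma orth_projP x : is_orth_proj inner W x (P x).
Proof. exact: xgetPex (W_proj x). Qed.

Lemma orth_proj_pythagoras x : `|x| ^+ 2 = `|x - P x| ^+ 2 + `|P x| ^+ 2.
Proof.
by have [WPx xPx] := orth_projP x; rewrite -(pythagoras ip) ?subrK ?xPx.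
Qed.

Lemma sqr_norm_residual_le x : `|x - P x| ^+ 2 <= `|x| ^+ 2.
Proof. by rewrite [leRHS]orth_proj_pythagoras lerDl exprn_ge0. Qed.

Lemma inner_residualC x y : inner (x - P x) y = inner x (y - P y).
Proof.
have [WPx xPx] := orth_projP x; have [WPy yPy] := orth_projP y.
have := xPx _ WPy; have := yPy _ WPx.
rewrite !(innerBl ip) !(innerBr ip) (innerC ip y) (innerC ip (P y)); lra.
Qed.

Lemma sqr_norm_residual x : `|x - P x| ^+ 2 = inner (x - P x) x.
Proof.
have [WPx xPx] := orth_projP x.
by rewrite (sqr_norm_inner ip) [in LHS](innerBr ip) (xPx _ WPx) subr0.
Qed.

(* The [w]-component of the old residual is [<P' x - P x, w - P w>], and
   [P' x - P x] is orthogonal to the new residual [x - P' x]. *)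
Lemma sqr_norm_residual_refine (W' : set V) x w :
  (forall x, exists p, is_orth_proj inner W' x p) -> W `<=` W' ->
  (forall a b, W' a -> W' b -> W' (a - b)) -> W' w -> `|w| <= 1 ->
  `|x - orth_proj inner W' x| ^+ 2 + inner (x - P x) w ^+ 2 <= `|x - P x| ^+ 2.
Proof.
move=> W'_proj WW' W'B W'w w_le1.
have [W'P'x xP'x] : is_orth_proj inner W' x (orth_proj inner W' x).
  exact: xgetPex (W'_proj x).
set P'x := orth_proj inner W' x in W'P'x xP'x *.
have [WPw wPw] := orth_projP w; have [WPx _] := orth_projP x.
pose q := P'x - P x; pose u := w - P w.
have W'q : W' q by apply: W'B => //; apply: WW'.
have W'u : W' u by apply: W'B => //; apply: WW'.
have x_split : x - P x = (x - P'x) + q by rewrite /q addrA subrK.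
have xw_qu : inner (x - P x) w = inner q u.
  rewrite inner_residualC -/u -{1}(subrK (P x) x) (innerDl ip) x_split.
  have -> : inner (P x) u = 0 by rewrite (innerC ip); apply: wPw.
  by rewrite addr0 (innerDl ip) xP'x // add0r.
have u_le1 : `|u| ^+ 2 <= 1.
  by apply: le_trans (sqr_norm_residual_le w) _; rewrite expr_le1.
rewrite xw_qu x_split (pythagoras ip _ _ (xP'x _ W'q)) lerD2l.
apply: le_trans (cauchy_schwarz_sqr ip q u) _.
by rewrite ler_piMr ?exprn_ge0.
Qed.

End Projection.

Section OMPSpace.
Context {R : realType} {V : normedModType R} {inner : V -> V -> R}.
Hypothesis ip : is_inner_product inner.
Variable omega : nat -> V.
Local Notation W := (OMP_space omega).

Lemma OMP_spaceS k : W k `<=` W k.+1.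
Proof.
apply: lin_spanS => _ [i /andP[i_ge1 i_lek] <-]; exists i => //.
by rewrite /= i_ge1 (leq_trans i_lek).
Qed.

Lemma OMP_space_omega k : W k.+1 (omega k.+1).
Proof. by apply: sub_lin_span; exists k.+1 => //=; rewrite leqnn. Qed.

(* One Gram-Schmidt step: add to the projection onto [W k] the component of
   the residual along [omega k.+1 - P_(W k) omega k.+1]. *)
Lemma OMP_space_proj k x : exists p, is_orth_proj inner (W k) x p.
Proof.
elim: k x => [|k IH] x.
  exists 0; split; first exact: lin_span0.
  move=> w Ww; rewrite (innerC ip); apply: (orth_lin_span ip) Ww.
  by move=> s [i /andP[i_ge1 i_le0] _]; move: (leq_trans i_ge1 i_le0).
have [px [Wpx xpx]] := IH x; have [pw [Wpw wpw]] := IH (omega k.+1).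
pose u := omega k.+1 - pw; pose c := inner (x - px) u / inner u u.
have Wu : W k.+1 u.
  by apply: lin_spanB; [exact: OMP_space_omega | exact: OMP_spaceS].
exists (px + c *: u); split.
  by rewrite addrC; apply: lin_spanZD => //; apply: OMP_spaceS.
move=> w Ww; rewrite (innerC ip) opprD addrA.
apply: (orth_lin_span ip) Ww => _ [i /andP[i_ge1 i_le] <-].
rewrite (innerC ip) (innerBl ip) (innerZl ip).
have [->|i_ne] := eqVneq i k.+1.
  have xu : inner (x - px) (omega k.+1) = inner (x - px) u.
    by rewrite (innerBr ip) (xpx _ Wpw) subr0.
  have uu : inner u (omega k.+1) = inner u u.
    by rewrite [in RHS](innerBr ip) (wpw _ Wpw) subr0.
  rewrite xu uu; have [uu0|uu_neq0] := eqVneq (inner u u) 0.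
    have u0 : u = 0.
      by apply/eqP; rewrite -normr_eq0 -sqrf_eq0 (sqr_norm_inner ip) uu0.
    by rewrite u0 (inner0r ip) (inner0l ip) mulr0 subr0.
  by rewrite /c divfK // subrr.
have Wi : W k (omega i).
  by apply: sub_lin_span; exists i => //=; rewrite i_ge1 -ltnS ltn_neqAle i_ne.
by rewrite xpx // wpw // mulr0 subr0.
Qed.

End OMPSpace.

Section OrthonormalFamily.
Context {R : realType} {V : normedModType R} {inner : V -> V -> R}.
Hypothesis ip : is_inner_product inner.
Context {n : nat} {phi : 'I_n -> V}.
Hypothesis phi_orthonormal : forall i j, inner (phi i) (phi j) = (i == j)%:R.
Local Notation Vn := (lin_span [set phi i | i in setT]).

Lemma norm_orthonormal i : `|phi i| = 1.
Proof.
by apply/eqP; rewrite -sqrp_eq1 // (sqr_norm_inner ip) phi_orthonormal eqxx.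
Qed.

Lemma inner_orthonormal_sum (a : 'I_n -> R) j :
  inner (\sum_(i < n) a i *: phi i) (phi j) = a j.
Proof.
rewrite (inner_suml ip) (bigD1 j) //= phi_orthonormal eqxx mulr1 big1 ?addr0 //.
by move=> i /negbTE i_neq_j; rewrite phi_orthonormal i_neq_j mulr0.
Qed.

Lemma orthonormal_expansion v :
  Vn v -> v = \sum_(i < n) inner v (phi i) *: phi i.
Proof.
have coef_ex : forall v, Vn v -> exists a, v = \sum_(i < n) a i *: phi i.
  apply: lin_span_ind.
    by exists (fun=> 0); rewrite big1 // => i _; rewrite scale0r.
  move=> _ _ c [a ->] [j _ <-]; exists (fun i => a i + c * (i == j)%:R).
  under [RHS]eq_bigr do rewrite scalerDl.
  rewrite big_split /=; congr (_ + _).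
  rewrite (bigD1 j) //= eqxx mulr1 big1 ?addr0 // => i /negbTE ->.
  by rewrite mulr0 scale0r.
move=> /coef_ex [a ->]; apply: eq_bigr => i _.
by rewrite inner_orthonormal_sum.
Qed.

Lemma bessel_unit v u : Vn v -> `|v| = 1 ->
  inner v u ^+ 2 <= \sum_(i < n) inner (phi i) u ^+ 2.
Proof.
move=> Vv v1; pose y := \sum_(i < n) inner (phi i) u *: phi i.
have vu_vy : inner v u = inner v y.
  rewrite {1}(orthonormal_expansion _ Vv) (inner_suml ip) (innerC ip v).
  rewrite (inner_suml ip); apply: eq_bigr => i _.
  by rewrite (innerC ip v) mulrC.
have y2 : `|y| ^+ 2 = \sum_(i < n) inner (phi i) u ^+ 2.
  rewrite (sqr_norm_inner ip) {1}/y (inner_suml ip); apply: eq_bigr => i _.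
  by rewrite (innerC ip (phi i) y) /y inner_orthonormal_sum expr2.
rewrite vu_vy -y2; apply: le_trans (cauchy_schwarz_sqr ip v y) _.
by rewrite v1 expr1n mul1r.
Qed.

Lemma inner_unit_le_sum g v : Vn v -> `|v| = 1 ->
  `|inner g v| <= \sum_(i < n) `|inner g (phi i)|.
Proof.
move=> Vv v1.
rewrite (innerC ip) {1}(orthonormal_expansion _ Vv) (inner_suml ip).
apply: le_trans (ler_norm_sum _ _ _) _; apply: ler_sum => i _.
rewrite normrM (innerC ip g); apply: ler_piMl => //.
apply: le_trans (cauchy_schwarz ip v (phi i)) _.
by rewrite v1 norm_orthonormal mul1r.
Qed.

End OrthonormalFamily.

Lemma OMP_residual_decrease {R : realType} {V : normedModType R}
    {inner : V -> V -> R} (ip : is_inner_product inner) {n : nat}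
    {phi : 'I_n -> V}
    (phi_orthonormal : forall i j, inner (phi i) (phi j) = (i == j)%:R)
    (omega : nat -> V) k v :
  `|omega k.+1| = 1 -> lin_span [set phi i | i in setT] v -> `|v| = 1 ->
  OMP_residual inner phi omega k.+1 +
    inner (v - orth_proj inner (OMP_space omega k) v) (omega k.+1) ^+ 2
    <= OMP_residual inner phi omega k.
Proof.
move=> omega1 Vv v1; set P := orth_proj inner (OMP_space omega k).
have projk := OMP_space_proj ip omega k.
apply: (@le_trans _ _ (OMP_residual inner phi omega k.+1 +
    \sum_(i < n) inner (phi i - P (phi i)) (omega k.+1) ^+ 2)).
  rewrite lerD2l (inner_residualC ip projk).
  under eq_bigr do rewrite (inner_residualC ip projk).
  exact: bessel_unit.
rewrite /OMP_residual -big_split; apply: ler_sum => i _.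
apply: (sqr_norm_residual_refine ip projk _ _ _ (OMP_space_proj ip omega k.+1)).
- exact: OMP_spaceS.
- exact: lin_spanB.
- exact: OMP_space_omega.
- by rewrite omega1.
Qed.

Section Convergence.
Context {R : realType}.

(* [r] converges, so its increments, which dominate [a k ^+ 2], tend to [0]. *)
Lemma cvg_sqr_decrement (r a : nat -> R) :
  (forall k, 0 <= r k) -> (forall k, r k.+1 + a k ^+ 2 <= r k) ->
  a @ \oo --> 0.
Proof.
move=> r_ge0 r_step.
have r_decr k : r k.+1 <= r k.
  by apply: le_trans (r_step k); rewrite lerDl sqr_ge0.
have r_noninc : {homo r : i j / (i <= j)%N >-> j <= i}.
  by apply: homo_leq => [x|y x z xy yz|k] //; apply: le_trans yz xy.
have r_cvg : cvgn r.
  by apply: nonincreasing_is_cvgn r_noninc _; exists 0 => _ [k _ <-].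
have r_incr0 : (fun k => r k - r k.+1) @ \oo --> 0.
  have rS_cvg : (fun k => r k.+1) @ \oo --> limn r.
    by rewrite (cvg_shiftS r); exact: r_cvg.
  by rewrite -(subrr (limn r)); exact: (cvgB r_cvg rS_cvg).
apply/cvgr0Pnorm_lt => e e_gt0.
near=> k; have : `|r k - r k.+1| < e ^+ 2.
  by near: k; apply: (cvgr0_norm_lt _ r_incr0); rewrite exprn_gt0.
move/ltr_normlW => r_incr_lt.
rewrite -ltr_sqr ?nnegrE ?(ltW e_gt0) // real_normK ?num_real //.
by apply: le_lt_trans r_incr_lt; have := r_step k; lra.
Unshelve. all: end_near.
Qed.

Lemma cvg_sum0 (I : Type) (s : seq I) (f : I -> nat -> R) :
  (forall i, f i @ \oo --> 0) -> (fun k => \sum_(i <- s) f i k) @ \oo --> 0.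
Proof.
move=> f0; rewrite -fct_sumE.
apply: (big_ind (fun h : nat -> R => h @ \oo --> 0)) => //.
  exact: cvg_cst.
by move=> g h g0 h0; rewrite -(addr0 0); apply: cvgD.
Qed.

End Convergence.

Section WeakConvergence.
Context {R : realType} {V : normedModType R} {inner : V -> V -> R}.
Hypothesis ip : is_inner_product inner.
Context {g : nat -> V}.

Lemma cvg_inner_lin_span (D : set V) (s : nat -> R) :
  s @ \oo --> 0 -> (forall k w, D w -> `|inner (g k) w| <= s k) ->
  forall y, lin_span D y -> (fun k => inner (g k) y) @ \oo --> 0.
Proof.
move=> s0 gD y Dy.
have [C gy_le] : exists C, forall k, `|inner (g k) y| <= C * s k.
  move: y Dy; apply: lin_span_ind => [|x w c [C gx_le] Dw].
    by exists 0 => k; rewrite (inner0r ip) normr0 mul0r.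
  exists (C + `|c|) => k; rewrite (innerDr ip) (innerZr ip) mulrDl.
  apply: le_trans (ler_normD _ _) _; rewrite normrM.
  by apply: lerD; [exact: gx_le | apply: ler_wpM2l => //; exact: gD].
apply: norm_cvg0; apply: (@squeeze_cvgr _ _ _ _ (fun=> 0) (fun k => C * s k)).
- by near=> k; rewrite normr_ge0 gy_le.
- exact: cvg_cst.
- by rewrite -(mulr0 C); apply: cvgM => //; exact: cvg_cst.
Unshelve. all: end_near.
Qed.

Lemma cvg_inner_closure (A : set V) :
  (forall k, `|g k| <= 1) ->
  (forall y, A y -> (fun k => inner (g k) y) @ \oo --> 0) ->
  forall y, closure A y -> (fun k => inner (g k) y) @ \oo --> 0.
Proof.
move=> g_le1 gA y Ay; apply/cvgr0Pnorm_lt => e e_gt0.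
have e2_gt0 : 0 < e / 2 by rewrite divr_gt0.
have [z [Az]] := Ay _ (nbhsx_ballx y _ e2_gt0); rewrite -ball_normE /= => yz_lt.
near=> k; have : `|inner (g k) z| < e / 2.
  by near: k; apply: (cvgr0_norm_lt _ (gA z Az)).
have : `|inner (g k) (y - z)| <= `|y - z|.
  by apply: le_trans (cauchy_schwarz ip _ _) _; rewrite ler_piMl.
have : `|inner (g k) y| <= `|inner (g k) z| + `|inner (g k) (y - z)|.
  by apply: le_trans _ (ler_normD _ _); rewrite -(innerDr ip) addrC subrK.
lra.
Unshelve. all: end_near.
Qed.

End WeakConvergence.

Lemma OMP_residual_le_worst_case {R : realType} {V : normedModType R}
    {inner : V -> V -> R} (ip : is_inner_product inner) {n : nat}
    {phi : 'I_n -> V}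
    (phi_orthonormal : forall i j, inner (phi i) (phi j) = (i == j)%:R)
    (omega : nat -> V) k v :
  let P := orth_proj inner (OMP_space omega k) in
  lin_span [set phi i | i in setT] v -> `|v| = 1 ->
  (forall u, lin_span [set phi i | i in setT] u -> `|u| = 1 ->
     `|u - P u| <= `|v - P v|) ->
  OMP_residual inner phi omega k
    <= n%:R * \sum_(i < n) `|inner (v - P v) (phi i)|.
Proof.
move=> P Vv v1 v_worst; have projk := OMP_space_proj ip omega k.
have phi_le i : `|phi i - P (phi i)| ^+ 2 <= `|v - P v| ^+ 2.
  rewrite ler_sqr ?nnegrE //; apply: v_worst.
    by apply: sub_lin_span; exists i.
  exact: (norm_orthonormal ip phi_orthonormal).
have g_sum : `|v - P v| ^+ 2 <= \sum_(i < n) `|inner (v - P v) (phi i)|.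
  rewrite (sqr_norm_residual ip projk); apply: le_trans (ler_norm _) _.
  exact: inner_unit_le_sum.
apply: le_trans (ler_wpM2l (ler0n _ n) g_sum).
rewrite mulr_natl -[n in _ *+ n]card_ord -sumr_const; exact: ler_sum.
Qed.

Theorem mainTheorem13 (R : realType) (V : completeNormedModType R)
  (inner : V -> V -> R) (D : set V) (n : nat) (phi : 'I_n -> V) (kappa : R)
  (v omega : nat -> V) :
  is_inner_product inner ->
  is_dictionary D ->
  (forall i j : 'I_n, inner (phi i) (phi j) = (i == j)%:R) ->
  0 < kappa < 1 ->
  worst_case_OMP inner D (lin_span [set phi i | i in setT]) kappa v omega ->
  OMP_residual inner phi omega @ \oo --> 0.
Proof.
move=> ip [D_unit D_dense] phi_orthonormal /andP[kappa_gt0 _] omp.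
pose g k := v k.+1 - orth_proj inner (OMP_space omega k) (v k.+1).
have g_le1 k : `|g k| <= 1.
  have [_ v1 _ _ _] := omp k.+1 isT; rewrite -(expr_le1 (n := 2)) //.
  apply: le_trans (sqr_norm_residual_le ip (OMP_space_proj ip omega k) _) _.
  by rewrite v1 expr1n.
have greedy0 : (fun k => inner (g k) (omega k.+1)) @ \oo --> 0.
  apply: (@cvg_sqr_decrement _ (OMP_residual inner phi omega)).
    by move=> k; apply: sumr_ge0 => i _; apply: exprn_ge0.
  move=> k; have [Vv v1 _ D_omega _] := omp k.+1 isT.
  exact: OMP_residual_decrease (D_unit _ D_omega) Vv v1.
have dict_le k w : D w ->
    `|inner (g k) w| <= kappa^-1 * `|inner (g k) (omega k.+1)|.
  have [_ _ _ _ greedy] := omp k.+1 isT.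
  exact: (weak_greedy_le ip _ _ _ _ kappa_gt0 D_unit greedy).
have phi_cvg i : (fun k => `|inner (g k) (phi i)|) @ \oo --> 0.
  apply/norm_cvg0P; apply: (cvg_inner_closure ip _ g_le1).
    apply: (cvg_inner_lin_span ip D
      (fun k => kappa^-1 * `|inner (g k) (omega k.+1)|) _ dict_le).
    rewrite -[X in _ --> X](mulr0 kappa^-1); apply: cvgM (cvg_cst _) _.
    exact/norm_cvg0P.
  by rewrite D_dense.
apply: (@squeeze_cvgr _ _ _ _ (fun=> 0)
  (fun k => n%:R * \sum_(i < n) `|inner (g k) (phi i)|)); last first.
- rewrite -[X in _ --> X](mulr0 n%:R); apply: cvgM (cvg_cst _) _.
  exact: cvg_sum0.
- exact: cvg_cst.
near=> k; have [Vv v1 v_worst _ _] := omp k.+1 isT.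
rewrite (OMP_residual_le_worst_case ip phi_orthonormal) // andbT.
by apply: sumr_ge0 => i _; apply: exprn_ge0.
Unshelve. all: end_near.
Qed.
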